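(* Let $\alpha\in(0,1]$, $F\in C^{1,\alpha}_{\mathsf h}(\mathbb H,\mathbb R^2)$ and $p\in\mathbb H$ nondegenerate for $F$. Let $F_{p,r}(q):=\big(F(p\,\delta_r(q))-F(p)\big)/r$ for $r>0$ and $F_{p,0}(q):=L(q):=\nabla_{\mathsf h}F(p)\,q^{\mathsf h}$. Then for every $\varepsilon>0$ and every compact $K\subseteq L(B(0,\varepsilon))$ there exists $\bar r>0$ such that $K\subseteq F_{p,r}(B(0,\varepsilon))$ for every $r\in[0,\bar r]$.
   Context: The Heisenberg group $\mathbb H$ is $\mathbb R^3$ with product $(x^1,x^2,x^3)(y^1,y^2,y^3)=(x^1+y^1,x^2+y^2,x^3+y^3+x^1y^2-x^2y^1)$; $x^{\mathsf h}=(x^1,x^2)$. Dilations $\delta_r(x)=(rx^1,rx^2,r^2x^3)$. $\mathsf d$ is a fixed left-invariant, $1$-homogeneous distance on $\mathbb H$; $B(x,r)$ is the open $\mathsf d$-ball. $X_1=\partial_1-x^2\partial_3$, $X_2=\partial_2+x^1\partial_3$. $C^{1,\alpha}_{\mathsf h}(\mathbb H,\mathbb R^2)$: maps $F$ with $X_1F,X_2F$ existing everywhere and $\nabla_{\mathsf h}F=[X_1F,X_2F]$ $\alpha$-Hölder w.r.t. $\mathsf d$ on bounded sets. $p$ nondegenerate: $\nabla_{\mathsf h}F(p)$ invertible. *)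

From Stdlib Require Import Reals Lra List.
Open Scope R_scope.

Record Hpt := mkH { hx1 : R; hx2 : R; hx3 : R }.

Definition h0 : Hpt := mkH 0 0 0.

Definition hmul (x y : Hpt) : Hpt :=
  mkH (hx1 x + hx1 y) (hx2 x + hx2 y)
      (hx3 x + hx3 y + hx1 x * hx2 y - hx2 x * hx1 y).

Definition hdil (r : R) (x : Hpt) : Hpt :=
  mkH (r * hx1 x) (r * hx2 x) (r * r * hx3 x).

Definition is_homog_dist (d : Hpt -> Hpt -> R) : Prop :=
  (forall x y, 0 <= d x y) /\
  (forall x y, d x y = 0 <-> x = y) /\
  (forall x y, d x y = d y x) /\
  (forall x y z, d x z <= d x y + d y z) /\
  (forall z x y, d (hmul z x) (hmul z y) = d x y) /\
  (forall r x y, 0 < r -> d (hdil r x) (hdil r y) = r * d x y).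

Definition hball (d : Hpt -> Hpt -> R) (x : Hpt) (r : R) (y : Hpt) : Prop :=
  d x y < r.

Definition vderiv_lim (g : R -> R * R) (t0 : R) (l : R * R) : Prop :=
  derivable_pt_lim (fun t => fst (g t)) t0 (fst l) /\
  derivable_pt_lim (fun t => snd (g t)) t0 (snd l).

(* X_1 F (x) = l : derivative of t |-> F(x * (t,0,0)) at t = 0;
   indeed X_1 = d1 - x2 d3. *)
Definition hasX1 (F : Hpt -> R * R) (x : Hpt) (l : R * R) : Prop :=
  vderiv_lim (fun t => F (hmul x (mkH t 0 0))) 0 l.

(* X_2 F (x) = l : derivative of t |-> F(x * (0,t,0)) at t = 0;
   indeed X_2 = d2 + x1 d3. *)
Definition hasX2 (F : Hpt -> R * R) (x : Hpt) (l : R * R) : Prop :=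
  vderiv_lim (fun t => F (hmul x (mkH 0 t 0))) 0 l.

(* Horizontal gradient nabla_h F = [X1F | X2F] (2x2 matrix whose columns are
   DF1 x = X1 F(x) and DF2 x = X2 F(x)); its norm: max of entries. *)
Definition mat_norm (a b : R * R) : R :=
  Rmax (Rmax (Rabs (fst a)) (Rabs (snd a))) (Rmax (Rabs (fst b)) (Rabs (snd b))).

Definition vsub (u v : R * R) : R * R := (fst u - fst v, snd u - snd v).

(* alpha-Hoelder continuity of nabla_h F w.r.t. d on bounded sets
   (every bounded set is contained in some ball B(0,R0)). *)
Definition hoelder_on_bounded (d : Hpt -> Hpt -> R) (alpha : R)
  (DF1 DF2 : Hpt -> R * R) : Prop :=
  forall R0, 0 < R0 -> exists C, forall x y,
    d h0 x < R0 -> d h0 y < R0 -> x <> y ->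
    mat_norm (vsub (DF1 x) (DF1 y)) (vsub (DF2 x) (DF2 y))
      <= C * Rpower (d x y) alpha.

Definition C1alpha_h (d : Hpt -> Hpt -> R) (alpha : R) (F : Hpt -> R * R)
  (DF1 DF2 : Hpt -> R * R) : Prop :=
  (forall x, hasX1 F x (DF1 x)) /\ (forall x, hasX2 F x (DF2 x)) /\
  hoelder_on_bounded d alpha DF1 DF2.

Definition hdet (a b : R * R) : R := fst a * snd b - fst b * snd a.

Definition linL (a b : R * R) (q : Hpt) : R * R :=
  (hx1 q * fst a + hx2 q * fst b, hx1 q * snd a + hx2 q * snd b).

Definition Fpr (F : Hpt -> R * R) (DF1 DF2 : Hpt -> R * R) (p : Hpt) (r : R)
  (q : Hpt) : R * R :=
  if Req_EM_T r 0 then linL (DF1 p) (DF2 p) q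
  else ((fst (F (hmul p (hdil r q))) - fst (F p)) / r,
        (snd (F (hmul p (hdil r q))) - snd (F p)) / r).

Definition dist2 (z w : R * R) : R :=
  sqrt ((fst z - fst w) ^ 2 + (snd z - snd w) ^ 2).

Definition open2 (U : R * R -> Prop) : Prop :=
  forall z, U z -> exists e, 0 < e /\ forall w, dist2 z w < e -> U w.

Definition compact2 (K : R * R -> Prop) : Prop :=
  forall (I : Type) (U : I -> R * R -> Prop),
    (forall i, open2 (U i)) ->
    (forall z, K z -> exists i, U i z) ->
    exists l : list I, forall z, K z -> exists i, In i l /\ U i z.

Definition image2 (G : Hpt -> R * R) (A : Hpt -> Prop) (z : R * R) : Prop :=
  exists q, A q /\ G q = z.

From Stdlib Require Import Reals Lra List.
Open Scope R_scope.

(* Fix [q0] in the ball and a target [w] close to [L q0]; parametrise a neighbourhood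
   of [q0] by the grid [q0 (a,0,0) (0,b,0)].  Every point of [H] is reached from [0]
   by a horizontal path of length [O(|x1| + |x2| + sqrt |x3 - x1 x2|)], the vertical
   part being a commutator.  Along horizontal lines the mean value theorem and the
   Hoelder continuity of [nabla_h F] show that [F_{p,r}] moves like [L] up to an error
   that is small for small [r].  In the coordinates dual to [nabla_h F(p)], the map
   [(a,b) -> F_{p,r}(grid)] is therefore a small perturbation of a translation:
   increasing in [b], and continuous in [a] with a square-root modulus (moving [a]
   past the [b]-segment costs a commutator).  A nested intermediate value argument
   produces a preimage of [w], and compactness of [K] makes the threshold uniform. *)

Lemma Hpt_ext (x y : Hpt) :
  hx1 x = hx1 y -> hx2 x = hx2 y -> hx3 x = hx3 y -> x = y.
Proof. destruct x, y; simpl; intros; subst; reflexivity. Qed.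

Ltac hring := apply Hpt_ext; simpl; ring.

Lemma Hpt_eq_dec (x y : Hpt) : x = y \/ x <> y.
Proof.
  destruct (Req_dec (hx1 x) (hx1 y)); [|right; intros ->; auto].
  destruct (Req_dec (hx2 x) (hx2 y)); [|right; intros ->; auto].
  destruct (Req_dec (hx3 x) (hx3 y)); [|right; intros ->; auto].
  left; apply Hpt_ext; auto.
Qed.

Lemma hmul_assoc x y z : hmul (hmul x y) z = hmul x (hmul y z).
Proof. hring. Qed.

Lemma hmul_h0_r x : hmul x h0 = x.
Proof. hring. Qed.

Lemma hmul_h0_l x : hmul h0 x = x.
Proof. hring. Qed.

Lemma hdil_h0 r : hdil r h0 = h0.
Proof. hring. Qed.

Lemma hdil_hmul r x y : hdil r (hmul x y) = hmul (hdil r x) (hdil r y).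
Proof. hring. Qed.

Definition hline (i : bool) (t : R) : Hpt := if i then mkH t 0 0 else mkH 0 t 0.

Lemma hline_add i s t : hmul (hline i s) (hline i t) = hline i (s + t).
Proof. destruct i; hring. Qed.

Lemma hline_dil i r t : hdil r (hline i t) = hline i (r * t).
Proof. destruct i; hring. Qed.

Lemma hline_0 i : hline i 0 = h0.
Proof. destruct i; hring. Qed.

Section HomogeneousDistance.

Variable d : Hpt -> Hpt -> R.
Hypothesis Hd : is_homog_dist d.

Lemma d_nonneg x y : 0 <= d x y.
Proof. apply Hd. Qed.

Lemma d_eq0 x y : d x y = 0 <-> x = y.
Proof. apply Hd. Qed.

Lemma d_sym x y : d x y = d y x.
Proof. apply Hd. Qed.

Lemma d_triangle x y z : d x z <= d x y + d y z.
Proof. apply Hd. Qed.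

Lemma d_hmul_l z x y : d (hmul z x) (hmul z y) = d x y.
Proof. apply Hd. Qed.

Lemma d_hdil r x y : 0 < r -> d (hdil r x) (hdil r y) = r * d x y.
Proof. apply Hd. Qed.

Definition hnorm (y : Hpt) : R := d h0 y.

Lemma hnorm_nonneg y : 0 <= hnorm y.
Proof. apply d_nonneg. Qed.

Lemma hnorm_h0 : hnorm h0 = 0.
Proof. apply d_eq0; reflexivity. Qed.

Lemma hnorm_hmul_le y z : hnorm (hmul y z) <= hnorm y + hnorm z.
Proof.
  unfold hnorm. rewrite <- (d_hmul_l y h0 z), hmul_h0_r.
  apply d_triangle.
Qed.

Lemma d_hmul_hdil x r y : 0 < r -> d x (hmul x (hdil r y)) = r * hnorm y.
Proof.
  intros Hr. rewrite <- (hmul_h0_r x) at 1.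
  rewrite d_hmul_l, <- (hdil_h0 r), d_hdil by exact Hr. reflexivity.
Qed.

Lemma hnorm_hline_pos i t : 0 < t -> hnorm (hline i t) = t * hnorm (hline i 1).
Proof.
  intros Ht. unfold hnorm.
  rewrite <- d_hdil, hdil_h0, hline_dil, Rmult_1_r by exact Ht. reflexivity.
Qed.

Lemma hnorm_hline_opp i t : hnorm (hline i (- t)) = hnorm (hline i t).
Proof.
  unfold hnorm. rewrite <- (d_hmul_l (hline i t)), hmul_h0_r, hline_add.
  rewrite Rplus_opp_r, hline_0. apply d_sym.
Qed.

Lemma hnorm_hline i t : hnorm (hline i t) = Rabs t * hnorm (hline i 1).
Proof.
  destruct (Rtotal_order t 0) as [Hn|[->|Hp]].
  - rewrite <- hnorm_hline_opp, Rabs_left by exact Hn.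
    apply hnorm_hline_pos; lra.
  - rewrite hline_0, hnorm_h0, Rabs_R0; ring.
  - rewrite Rabs_right by lra. apply hnorm_hline_pos, Hp.
Qed.

End HomogeneousDistance.

Definition word := list (bool * R).

Definition word_prod (w : word) : Hpt :=
  fold_right (fun ic acc => hmul (hline (fst ic) (snd ic)) acc) h0 w.

Definition word_len (w : word) : R :=
  fold_right (fun ic acc => Rabs (snd ic) + acc) 0 w.

Lemma word_len_nonneg w : 0 <= word_len w.
Proof.
  induction w as [|[i c] w IH]; simpl; [lra|]. pose proof (Rabs_pos c); lra.
Qed.

Lemma word_prod_app w1 w2 : word_prod (w1 ++ w2) = hmul (word_prod w1) (word_prod w2).
Proof.
  induction w1 as [|ic w1 IH]; simpl.
  - now rewrite hmul_h0_l.
  - now rewrite IH, hmul_assoc.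
Qed.

Lemma word_len_app w1 w2 : word_len (w1 ++ w2) = word_len w1 + word_len w2.
Proof. induction w1 as [|ic w1 IH]; simpl; [ring|rewrite IH; ring]. Qed.

Lemma hnorm_word_prod_le d cm w z : is_homog_dist d ->
  (forall i, hnorm d (hline i 1) <= cm) ->
  hnorm d (hmul z (word_prod w)) <= hnorm d z + word_len w * cm.
Proof.
  intros Hd Hcm. revert z. induction w as [|[i c] w IH]; intros z; simpl.
  - rewrite hmul_h0_r. lra.
  - rewrite <- hmul_assoc. eapply Rle_trans; [apply IH|].
    pose proof (hnorm_hmul_le d Hd z (hline i c)) as Hzc.
    rewrite (hnorm_hline d Hd) in Hzc.
    pose proof (Rabs_pos c). specialize (Hcm i). nra.
Qed.

(* [(s,0,0)(0,s',0)(-s,0,0)(0,-s',0) = (0,0,2ss')]: a vertical displacement [T]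
   costs horizontal length [O(sqrt |T|)] (for [T = 0], [T / 0 = 0] gives the empty move). *)
Definition comm_word (T : R) : word :=
  let s := sqrt (Rabs T) in let s' := T / (2 * s) in
  (true, s) :: (false, s') :: (true, - s) :: (false, - s') :: nil.

Lemma comm_word_prod T : word_prod (comm_word T) = mkH 0 0 T.
Proof.
  unfold comm_word; apply Hpt_ext; simpl; try ring.
  destruct (Req_dec T 0) as [->|HT].
  - rewrite Rabs_R0, sqrt_0. unfold Rdiv. rewrite ?Rmult_0_r, ?Rinv_0. ring.
  - assert (0 < sqrt (Rabs T)) by (apply sqrt_lt_R0, Rabs_pos_lt, HT).
    field. lra.
Qed.

Lemma comm_word_len T : word_len (comm_word T) = 3 * sqrt (Rabs T).
Proof.
  unfold comm_word, word_len; simpl. rewrite !Rabs_Ropp.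
  pose proof (sqrt_pos (Rabs T)).
  destruct (Req_dec T 0) as [->|HT].
  - rewrite Rabs_R0, sqrt_0. unfold Rdiv. rewrite Rmult_0_r, Rinv_0, Rmult_0_l, Rabs_R0. ring.
  - assert (0 < sqrt (Rabs T)) by (apply sqrt_lt_R0, Rabs_pos_lt, HT).
    unfold Rdiv. rewrite Rabs_mult, Rabs_inv, (Rabs_right (2 * _)), (Rabs_right (sqrt _)) by lra.
    assert (E : Rabs T * / (2 * sqrt (Rabs T)) = sqrt (Rabs T) / 2).
    { rewrite <- (sqrt_sqrt (Rabs T)) at 1 by apply Rabs_pos. field. lra. }
    rewrite E. lra.
Qed.

Definition reach_word (q : Hpt) : word :=
  (true, hx1 q) :: (false, hx2 q) :: comm_word (hx3 q - hx1 q * hx2 q).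

Lemma reach_word_prod q : word_prod (reach_word q) = q.
Proof.
  change (word_prod (reach_word q)) with
    (hmul (hline true (hx1 q)) (hmul (hline false (hx2 q))
       (word_prod (comm_word (hx3 q - hx1 q * hx2 q))))).
  rewrite comm_word_prod. hring.
Qed.

Lemma hnorm_hline_bound_nonneg d cm : is_homog_dist d ->
  (forall i, hnorm d (hline i 1) <= cm) -> 0 <= cm.
Proof.
  intros Hd Hcm. pose proof (hnorm_nonneg d Hd (hline true 1)). specialize (Hcm true). lra.
Qed.

Definition dot (l u : R * R) : R := fst l * fst u + snd l * snd u.

Definition norm1 (l : R * R) : R := Rabs (fst l) + Rabs (snd l).

Definition hgrad (DF1 DF2 : Hpt -> R * R) (i : bool) (x : Hpt) : R * R :=
  if i then DF1 x else DF2 x.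

Lemma norm1_nonneg l : 0 <= norm1 l.
Proof. unfold norm1. pose proof (Rabs_pos (fst l)); pose proof (Rabs_pos (snd l)); lra. Qed.

Lemma dot_sub_le l u v :
  Rabs (dot l u - dot l v) <= norm1 l * Rmax (Rabs (fst u - fst v)) (Rabs (snd u - snd v)).
Proof.
  unfold dot, norm1.
  replace (fst l * fst u + snd l * snd u - (fst l * fst v + snd l * snd v))
    with (fst l * (fst u - fst v) + snd l * (snd u - snd v)) by ring.
  eapply Rle_trans; [apply Rabs_triang|]. rewrite !Rabs_mult.
  pose proof (Rmax_l (Rabs (fst u - fst v)) (Rabs (snd u - snd v))).
  pose proof (Rmax_r (Rabs (fst u - fst v)) (Rabs (snd u - snd v))).
  pose proof (Rabs_pos (fst l)); pose proof (Rabs_pos (snd l)). nra.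
Qed.

Lemma dot_hgrad_sub_le DF1 DF2 l i x y :
  Rabs (dot l (hgrad DF1 DF2 i x) - dot l (hgrad DF1 DF2 i y))
    <= norm1 l * mat_norm (vsub (DF1 x) (DF1 y)) (vsub (DF2 x) (DF2 y)).
Proof.
  eapply Rle_trans; [apply dot_sub_le|].
  apply Rmult_le_compat_l; [apply norm1_nonneg|]. unfold mat_norm.
  destruct i; simpl; [apply Rmax_l|apply Rmax_r].
Qed.

Lemma dot_linL l v1 v2 q : dot l (linL v1 v2 q) = hx1 q * dot l v1 + hx2 q * dot l v2.
Proof. unfold dot, linL; simpl; ring. Qed.

Lemma dot_linL_hmul l v1 v2 x y :
  dot l (linL v1 v2 (hmul x y)) = dot l (linL v1 v2 x) + dot l (linL v1 v2 y).
Proof. rewrite !dot_linL; simpl; ring. Qed.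

Lemma dot_linL_hline l DF1 DF2 x i c :
  dot l (linL (DF1 x) (DF2 x) (hline i c)) = c * dot l (hgrad DF1 DF2 i x).
Proof. rewrite dot_linL; destruct i; simpl; ring. Qed.

Lemma derivable_pt_lim_dot l (g : R -> R * R) t0 v :
  vderiv_lim g t0 v -> derivable_pt_lim (fun t => dot l (g t)) t0 (dot l v).
Proof.
  intros [H1 H2]. unfold dot.
  exact (derivable_pt_lim_plus _ _ t0 _ _ (derivable_pt_lim_scal _ (fst l) t0 _ H1)
           (derivable_pt_lim_scal _ (snd l) t0 _ H2)).
Qed.

Lemma derivable_pt_lim_shift f t L :
  derivable_pt_lim (fun s => f (t + s)) 0 L -> derivable_pt_lim f t L.
Proof.
  intros H e He. destruct (H e He) as [del Hdel]. exists del.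
  intros h Hh Hlt. specialize (Hdel h Hh Hlt).
  rewrite Rplus_0_l, Rplus_0_r in Hdel. exact Hdel.
Qed.

Lemma Rabs_sub_chain_le A B C V W :
  Rabs (A - C - (V + W)) <= Rabs (A - B - W) + Rabs (B - C - V).
Proof. replace (A - C - (V + W)) with ((A - B - W) + (B - C - V)) by ring. apply Rabs_triang. Qed.

Lemma mvt_linear_error f f' k B X :
  (forall t, derivable_pt_lim f t (f' t)) ->
  (forall t, Rabs t <= Rabs X -> Rabs (f' t - k) <= B) ->
  Rabs (f X - f 0 - k * X) <= B * Rabs X.
Proof.
  intros Hd Hb.
  destruct (Rtotal_order X 0) as [Hn|[->|Hp]].
  - destruct (MVT_cor2 f f' X 0 Hn (fun c _ => Hd c)) as [c [Hc Hc2]].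
    replace (f X - f 0 - k * X) with ((f' c - k) * X) by lra.
    rewrite Rabs_mult. apply Rmult_le_compat_r; [apply Rabs_pos|].
    apply Hb. rewrite !Rabs_left by lra. lra.
  - replace (f 0 - f 0 - k * 0) with 0 by ring. rewrite Rabs_R0, Rmult_0_r. lra.
  - destruct (MVT_cor2 f f' 0 X Hp (fun c _ => Hd c)) as [c [Hc Hc2]].
    replace (f X - f 0 - k * X) with ((f' c - k) * X) by lra.
    rewrite Rabs_mult. apply Rmult_le_compat_r; [apply Rabs_pos|].
    apply Hb. rewrite !Rabs_right by lra. lra.
Qed.

Lemma Fpr_0 F DF1 DF2 p q : Fpr F DF1 DF2 p 0 q = linL (DF1 p) (DF2 p) q.
Proof. unfold Fpr. destruct (Req_EM_T 0 0); [reflexivity|lra]. Qed.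

Lemma dot_Fpr F DF1 DF2 p r q l : r <> 0 ->
  dot l (Fpr F DF1 DF2 p r q) = (dot l (F (hmul p (hdil r q))) - dot l (F p)) / r.
Proof.
  intros Hr. unfold Fpr. destruct (Req_EM_T r 0); [contradiction|].
  unfold dot; simpl. field. exact Hr.
Qed.

Lemma dot_Fpr_h0 F DF1 DF2 p r l : dot l (Fpr F DF1 DF2 p r h0) = 0.
Proof.
  destruct (Req_dec r 0) as [->|Hr].
  - rewrite Fpr_0. unfold dot, linL; simpl; ring.
  - rewrite dot_Fpr, hdil_h0, hmul_h0_r by exact Hr. unfold Rdiv; ring.
Qed.

Definition grid (q0 : Hpt) (a b : R) : Hpt :=
  hmul q0 (word_prod ((true, a) :: (false, b) :: nil)).

Lemma sqrt_le_2_sqrt b c : Rabs b <= 1 -> sqrt (Rabs (2 * b * c)) <= 2 * sqrt (Rabs c).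
Proof.
  intros Hb. replace (2 * sqrt (Rabs c)) with (sqrt (4 * Rabs c)).
  - apply sqrt_le_1_alt. rewrite !Rabs_mult, (Rabs_right 2) by lra.
    pose proof (Rabs_pos c); pose proof (Rabs_pos b). nra.
  - rewrite sqrt_mult_alt by lra. replace 4 with (2 * 2) by ring. rewrite sqrt_square; lra.
Qed.

Lemma hdil_hline_rescale p r z i t : r <> 0 ->
  hmul (hmul p (hdil r z)) (hline i t) = hmul p (hdil r (hmul z (hline i (t / r)))).
Proof.
  intros Hr. rewrite hdil_hmul, hline_dil, hmul_assoc. do 3 f_equal. field. exact Hr.
Qed.

Lemma derivable_pt_lim_dot_hline F DF1 DF2 l x i t0 :
  (forall x, vderiv_lim (fun t => F (hmul x (hline i t))) 0 (hgrad DF1 DF2 i x)) ->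
  derivable_pt_lim (fun t => dot l (F (hmul x (hline i t)))) t0
    (dot l (hgrad DF1 DF2 i (hmul x (hline i t0)))).
Proof.
  intros HX. apply derivable_pt_lim_shift.
  eapply derivable_pt_lim_ext; [|apply derivable_pt_lim_dot, HX].
  intros s. simpl. now rewrite hmul_assoc, hline_add.
Qed.

Section Increments.

Variables (d : Hpt -> Hpt -> R) (F DF1 DF2 : Hpt -> R * R) (p q0 : Hpt).
Variables (l : R * R) (r th Rz cm : R).
Hypothesis Hd : is_homog_dist d.
Hypothesis HX : forall i x, vderiv_lim (fun t => F (hmul x (hline i t))) 0 (hgrad DF1 DF2 i x).
Hypothesis Hcm : forall i, hnorm d (hline i 1) <= cm.
Hypothesis Hr : 0 <= r.
Hypothesis Hosc : forall i y, hnorm d y <= Rz ->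
  Rabs (dot l (hgrad DF1 DF2 i (hmul p (hdil r y))) - dot l (hgrad DF1 DF2 i p)) <= th.
Hypothesis HRz : hnorm d q0 + (word_len (reach_word q0) + 10) * cm <= Rz.

Let cm_nonneg : 0 <= cm := hnorm_hline_bound_nonneg d cm Hd Hcm.

Lemma oscillation_bound_nonneg : 0 <= Rz -> 0 <= th.
Proof.
  intros HRz0. eapply Rle_trans; [apply Rabs_pos|]. apply (Hosc true h0).
  rewrite hnorm_h0 by exact Hd. exact HRz0.
Qed.

Lemma Fpr_hline_increment i z c : hnorm d z + Rabs c * cm <= Rz ->
  Rabs (dot l (Fpr F DF1 DF2 p r (hmul z (hline i c))) - dot l (Fpr F DF1 DF2 p r z)
        - c * dot l (hgrad DF1 DF2 i p)) <= th * Rabs c.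
Proof.
  intros Hz.
  assert (Hth : 0 <= th).
  { apply oscillation_bound_nonneg. pose proof (hnorm_nonneg d Hd z). pose proof cm_nonneg.
    pose proof (Rabs_pos c). nra. }
  destruct (Req_dec r 0) as [->|Hr0].
  - rewrite !Fpr_0, dot_linL_hmul, dot_linL_hline.
    replace (_ + _ - _ - _) with 0 by ring. rewrite Rabs_R0.
    apply Rmult_le_pos; [exact Hth|apply Rabs_pos].
  - set (x := hmul p (hdil r z)).
    set (f := fun t => dot l (F (hmul x (hline i t)))).
    set (f' := fun t => dot l (hgrad DF1 DF2 i (hmul x (hline i t)))).
    assert (Hder : forall t, derivable_pt_lim f t (f' t))
      by (intros t; apply derivable_pt_lim_dot_hline, HX).
    assert (Hb : forall t, Rabs t <= Rabs (r * c) ->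
                   Rabs (f' t - dot l (hgrad DF1 DF2 i p)) <= th).
    { intros t Ht. unfold f', x. rewrite hdil_hline_rescale by exact Hr0. apply Hosc.
      eapply Rle_trans; [apply hnorm_hmul_le, Hd|]. rewrite hnorm_hline by exact Hd.
      assert (Rabs (t / r) <= Rabs c).
      { unfold Rdiv. rewrite Rabs_mult, Rabs_inv, (Rabs_right r) by lra.
        rewrite Rabs_mult, (Rabs_right r) in Ht by lra.
        apply (Rmult_le_reg_l r); [lra|]. field_simplify; lra. }
      pose proof (Rabs_pos (t / r)). pose proof (Hcm i). pose proof cm_nonneg. nra. }
    pose proof (mvt_linear_error f f' _ th (r * c) Hder Hb) as M.
    rewrite !dot_Fpr by exact Hr0.
    replace (hmul p (hdil r (hmul z (hline i c)))) with (hmul x (hline i (r * c)))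
      by (unfold x; rewrite hdil_hline_rescale by exact Hr0; do 4 f_equal; field; exact Hr0).
    replace (dot l (F (hmul p (hdil r z)))) with (f 0)
      by (unfold f; now rewrite hline_0, hmul_h0_r).
    change (dot l (F (hmul x (hline i (r * c))))) with (f (r * c)).
    replace ((f (r * c) - dot l (F p)) / r - (f 0 - dot l (F p)) / r
             - c * dot l (hgrad DF1 DF2 i p))
      with ((f (r * c) - f 0 - dot l (hgrad DF1 DF2 i p) * (r * c)) / r) by (field; exact Hr0).
    unfold Rdiv. rewrite Rabs_mult, Rabs_inv, (Rabs_right r) by lra.
    rewrite Rabs_mult, (Rabs_right r) in M by lra.
    apply (Rmult_le_reg_l r); [lra|]. field_simplify; lra.
Qed.

Lemma Fpr_word_increment w z : hnorm d z + word_len w * cm <= Rz ->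
  Rabs (dot l (Fpr F DF1 DF2 p r (hmul z (word_prod w))) - dot l (Fpr F DF1 DF2 p r z)
        - dot l (linL (DF1 p) (DF2 p) (word_prod w))) <= th * word_len w.
Proof.
  revert z. induction w as [|[i c] w IH]; intros z Hz; simpl in *.
  - rewrite hmul_h0_r. unfold dot, linL; simpl.
    replace (_ - _ - _) with 0 by ring. rewrite Rabs_R0. lra.
  - rewrite <- hmul_assoc, dot_linL_hmul, dot_linL_hline.
    pose proof (word_len_nonneg w). pose proof cm_nonneg.
    assert (Hstep := Fpr_hline_increment i z c ltac:(nra)).
    assert (Hz' : hnorm d (hmul z (hline i c)) + word_len w * cm <= Rz).
    { pose proof (hnorm_hmul_le d Hd z (hline i c)) as Hzc. rewrite hnorm_hline in Hzc by exact Hd.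
      pose proof (Hcm i). pose proof (Rabs_pos c). nra. }
    specialize (IH _ Hz').
    eapply Rle_trans;
      [apply (Rabs_sub_chain_le _ (dot l (Fpr F DF1 DF2 p r (hmul z (hline i c)))))|].
    lra.
Qed.

Lemma hnorm_grid_le a b : hnorm d (grid q0 a b) <= hnorm d q0 + (Rabs a + Rabs b) * cm.
Proof.
  unfold grid. eapply Rle_trans; [apply (hnorm_word_prod_le d cm _ _ Hd Hcm)|]. simpl. lra.
Qed.

Lemma Fpr_grid_approx a b : Rabs a <= 1 -> Rabs b <= 1 ->
  Rabs (dot l (Fpr F DF1 DF2 p r (grid q0 a b))
        - ((hx1 q0 + a) * dot l (DF1 p) + (hx2 q0 + b) * dot l (DF2 p)))
    <= th * (word_len (reach_word q0) + Rabs a + Rabs b).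
Proof.
  intros Ha Hb. set (w := reach_word q0 ++ (true, a) :: (false, b) :: nil).
  assert (Hw : word_prod w = grid q0 a b)
    by (unfold w, grid; now rewrite word_prod_app, reach_word_prod).
  assert (Hlen : word_len w = word_len (reach_word q0) + Rabs a + Rabs b)
    by (unfold w; rewrite word_len_app; simpl; ring).
  pose proof (hnorm_nonneg d Hd q0). pose proof cm_nonneg.
  pose proof (Fpr_word_increment w h0) as E.
  rewrite hmul_h0_l, hnorm_h0, Hw, Hlen, dot_Fpr_h0, dot_linL, Rminus_0_r in E by exact Hd.
  replace (hx1 (grid q0 a b)) with (hx1 q0 + a) in E by (unfold grid; simpl; ring).
  replace (hx2 (grid q0 a b)) with (hx2 q0 + b) in E by (unfold grid; simpl; ring).
  apply E. nra.
Qed.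

Lemma Fpr_grid_step2 a b b' : Rabs a <= 1 -> Rabs b <= 1 -> Rabs b' <= 1 ->
  Rabs (dot l (Fpr F DF1 DF2 p r (grid q0 a b')) - dot l (Fpr F DF1 DF2 p r (grid q0 a b))
        - (b' - b) * dot l (DF2 p)) <= th * Rabs (b' - b).
Proof.
  intros Ha Hb Hb'.
  replace (grid q0 a b') with (hmul (grid q0 a b) (hline false (b' - b)))
    by (unfold grid; simpl; hring).
  apply (Fpr_hline_increment false).
  pose proof (hnorm_grid_le a b). pose proof (word_len_nonneg (reach_word q0)).
  pose proof cm_nonneg. pose proof (Rabs_triang b' (- b)) as Htri. rewrite Rabs_Ropp in Htri.
  unfold Rminus. nra.
Qed.

Lemma Fpr_grid_step1 a a' b : Rabs a <= 1 -> Rabs a' <= 1 -> Rabs b <= 1 ->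
  Rabs (dot l (Fpr F DF1 DF2 p r (grid q0 a' b)) - dot l (Fpr F DF1 DF2 p r (grid q0 a b))
        - (a' - a) * dot l (DF1 p)) <= th * (Rabs (a' - a) + 6 * sqrt (Rabs (a' - a))).
Proof.
  intros Ha Ha' Hb. set (c := a' - a).
  (* moving [a] by [c] past the [b]-segment creates the vertical error [2bc] *)
  set (w := (true, c) :: comm_word (2 * b * c)).
  assert (Hw : word_prod w = hmul (hline true c) (mkH 0 0 (2 * b * c)))
    by (rewrite <- comm_word_prod; reflexivity).
  assert (Hlen : word_len w = Rabs c + 3 * sqrt (Rabs (2 * b * c)))
    by (rewrite <- comm_word_len; reflexivity).
  assert (Hc : Rabs c <= 2).
  { unfold c. pose proof (Rabs_triang a' (- a)) as Htri. rewrite Rabs_Ropp in Htri.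
    unfold Rminus. lra. }
  pose proof (sqrt_le_2_sqrt b c Hb). pose proof (sqrt_pos (Rabs c)).
  assert (Hs : sqrt (Rabs (2 * b * c)) <= 2).
  { apply Rle_trans with (sqrt (2 * 2)); [|rewrite sqrt_square; lra].
    apply sqrt_le_1_alt. rewrite !Rabs_mult, (Rabs_right 2) by lra.
    pose proof (Rabs_pos b). pose proof (Rabs_pos c). nra. }
  pose proof (Fpr_word_increment w (grid q0 a b)) as E.
  rewrite Hw, Hlen, dot_linL_hmul, dot_linL_hline, dot_linL in E.
  replace (hmul (grid q0 a b) (hmul (hline true c) (mkH 0 0 (2 * b * c)))) with (grid q0 a' b) in E
    by (unfold grid, c; simpl; hring).
  simpl in E. rewrite Rmult_0_l, Rmult_0_l, Rplus_0_l, Rplus_0_r in E.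
  eapply Rle_trans; [apply E|].
  - pose proof (hnorm_grid_le a b). pose proof cm_nonneg.
    pose proof (word_len_nonneg (reach_word q0)). pose proof (Rabs_pos c). nra.
  - assert (Hth : 0 <= th).
    { apply oscillation_bound_nonneg. pose proof (hnorm_nonneg d Hd q0). pose proof cm_nonneg.
      pose proof (word_len_nonneg (reach_word q0)). nra. }
    apply Rmult_le_compat_l; [exact Hth|]. lra.
Qed.

End Increments.

Lemma Rabs_le_bounds x B : Rabs x <= B -> - B <= x <= B.
Proof. unfold Rabs; destruct (Rcase_abs x); intros; lra. Qed.

Definition sqrt_mod (x : R) : R := Rabs x + sqrt (Rabs x).

Lemma sqrt_mod_nonneg x : 0 <= sqrt_mod x.
Proof. unfold sqrt_mod. pose proof (Rabs_pos x); pose proof (sqrt_pos (Rabs x)); lra. Qed.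

Lemma sqrt_mod_le x y : Rabs x <= Rabs y -> sqrt_mod x <= sqrt_mod y.
Proof.
  intros H. unfold sqrt_mod. pose proof (sqrt_le_1_alt _ _ H). lra.
Qed.

Lemma le_sqrt_of_le_1 t : 0 <= t <= 1 -> t <= sqrt t.
Proof.
  intros Ht. assert (sqrt t <= 1) by (rewrite <- sqrt_1; apply sqrt_le_1_alt; lra).
  rewrite <- (sqrt_sqrt t) at 1 by lra. pose proof (sqrt_pos t). nra.
Qed.

Lemma continuity_of_sqrt_mod (f : R -> R) N : 0 <= N ->
  (forall x y, Rabs (f x - f y) <= N * sqrt_mod (x - y)) -> continuity f.
Proof.
  intros HN Hf x e He.
  set (e' := e / (2 * N + 2)).
  assert (He' : 0 < e') by (apply Rdiv_lt_0_compat; lra).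
  exists (Rmin 1 (e' * e')). split; [apply Rmin_glb_lt; nra|].
  intros y [_ Hy]. simpl in *. unfold R_dist in *.
  pose proof (Rmin_l 1 (e' * e')). pose proof (Rmin_r 1 (e' * e')).
  set (t := Rabs (y - x)) in *.
  assert (S1 : t <= sqrt t) by (apply le_sqrt_of_le_1; split; [apply Rabs_pos|lra]).
  assert (S2 : sqrt t < e').
  { rewrite <- (sqrt_square e') by lra. apply sqrt_lt_1_alt. split; [apply Rabs_pos|lra]. }
  eapply Rle_lt_trans; [apply Hf|]. unfold sqrt_mod. fold t.
  assert (N * (t + sqrt t) <= 2 * N * e') by nra.
  assert (2 * N * e' < e)
    by (unfold e'; apply (Rmult_lt_reg_r (2 * N + 2)); [lra|]; field_simplify; lra).
  lra.
Qed.

Definition clamp (s a : R) : R := Rmax (- s) (Rmin s a).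

Lemma clamp_abs_le s a : 0 <= s -> Rabs (clamp s a) <= s.
Proof.
  intros Hs. apply Rabs_le. unfold clamp, Rmax, Rmin.
  repeat destruct Rle_dec; lra.
Qed.

Lemma clamp_id s a : Rabs a <= s -> clamp s a = a.
Proof.
  intros H. apply Rabs_le_bounds in H. unfold clamp.
  rewrite Rmin_right, Rmax_right by lra. reflexivity.
Qed.

Lemma clamp_sub_le s a b : 0 <= s -> Rabs (clamp s a - clamp s b) <= Rabs (a - b).
Proof.
  intros Hs. unfold clamp, Rmax, Rmin.
  repeat destruct Rle_dec; unfold Rabs; repeat destruct Rcase_abs; lra.
Qed.

Lemma slice_zero s (f : R -> R) : 0 <= s -> f (- s) <= 0 <= f s ->
  (forall b b', Rabs b <= s -> Rabs b' <= s -> Rabs (f b' - f b) <= 2 * Rabs (b' - b)) ->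
  {b | Rabs b <= s /\ f b = 0}.
Proof.
  intros Hs Hsign Hlip.
  destruct (IVT_cor (fun b => f (clamp s b)) (- s) s) as [b [Hb Hfb]].
  - apply (continuity_of_sqrt_mod _ 2); [lra|]. intros x y.
    eapply Rle_trans; [apply Hlip; apply clamp_abs_le, Hs|].
    pose proof (clamp_sub_le s x y Hs). pose proof (sqrt_pos (Rabs (x - y))).
    unfold sqrt_mod. lra.
  - lra.
  - rewrite !clamp_id by (rewrite ?Rabs_Ropp, Rabs_right; lra). nra.
  - assert (Hbs : Rabs b <= s) by (apply Rabs_le; lra).
    rewrite clamp_id in Hfb by exact Hbs. exists b; auto.
Qed.

Lemma slice_zeros_modulus s M (v : R -> R -> R) (g : R -> R) : 0 <= s -> 0 <= M ->
  (forall a, Rabs (g a) <= s /\ v (clamp s a) (g a) = 0) ->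
  (forall a b b', Rabs a <= s -> Rabs b <= s -> Rabs b' <= s ->
     Rabs (v a b' - v a b - (b' - b)) <= Rabs (b' - b) / 2) ->
  (forall a a' b, Rabs a <= s -> Rabs a' <= s -> Rabs b <= s ->
     Rabs (v a' b - v a b) <= M * sqrt_mod (a' - a)) ->
  forall x y, Rabs (g x - g y) <= 2 * M * sqrt_mod (x - y).
Proof.
  intros Hs HM Hg Hb Ha x y.
  assert (Hcl : forall a, Rabs (clamp s a) <= s) by (intros; apply clamp_abs_le, Hs).
  destruct (Hg x) as [Hgx Ex], (Hg y) as [Hgy Ey].
  pose proof (Hb (clamp s x) (g y) (g x) (Hcl x) Hgy Hgx) as B.
  pose proof (Ha (clamp s y) (clamp s x) (g y) (Hcl y) (Hcl x) Hgy) as A.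
  rewrite Ex in B. rewrite Ey in A.
  assert (Hmod : M * sqrt_mod (clamp s x - clamp s y) <= M * sqrt_mod (x - y))
    by (apply Rmult_le_compat_l; [exact HM|apply sqrt_mod_le, clamp_sub_le, Hs]).
  apply Rabs_le_bounds in B. apply Rabs_le_bounds in A.
  apply Rabs_le. destruct (Rle_or_lt 0 (g x - g y));
    [rewrite Rabs_right in B by lra|rewrite Rabs_left in B by lra]; lra.
Qed.

Lemma clamped_section_continuity s M (u : R -> R -> R) (g : R -> R) : 0 <= s -> 0 <= M ->
  (forall a, Rabs (g a) <= s) ->
  (forall a b b', Rabs a <= s -> Rabs b <= s -> Rabs b' <= s ->
     Rabs (u a b' - u a b) <= M * Rabs (b' - b)) ->
  (forall a a' b, Rabs a <= s -> Rabs a' <= s -> Rabs b <= s ->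
     Rabs (u a' b - u a b) <= M * sqrt_mod (a' - a)) ->
  (forall x y, Rabs (g x - g y) <= 2 * M * sqrt_mod (x - y)) ->
  continuity (fun a => u (clamp s a) (g a)).
Proof.
  intros Hs HM Hg Hb Ha Hgmod.
  assert (Hcl : forall a, Rabs (clamp s a) <= s) by (intros; apply clamp_abs_le, Hs).
  apply (continuity_of_sqrt_mod _ (2 * M * M + M)); [nra|]. intros x y.
  pose proof (Hb (clamp s x) (g y) (g x) (Hcl x) (Hg y) (Hg x)) as B.
  pose proof (Ha (clamp s y) (clamp s x) (g y) (Hcl y) (Hcl x) (Hg y)) as A.
  assert (Hmod : sqrt_mod (clamp s x - clamp s y) <= sqrt_mod (x - y))
    by (apply sqrt_mod_le, clamp_sub_le, Hs).
  pose proof (Hgmod x y). pose proof (sqrt_mod_nonneg (x - y)).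
  replace (u (clamp s x) (g x) - u (clamp s y) (g y))
    with ((u (clamp s x) (g x) - u (clamp s x) (g y))
          + (u (clamp s x) (g y) - u (clamp s y) (g y))) by ring.
  eapply Rle_trans; [apply Rabs_triang|].
  assert (M * Rabs (g x - g y) <= M * (2 * M * sqrt_mod (x - y)))
    by (apply Rmult_le_compat_l; lra).
  assert (M * sqrt_mod (clamp s x - clamp s y) <= M * sqrt_mod (x - y))
    by (apply Rmult_le_compat_l; lra).
  nra.
Qed.

(* A two-dimensional intermediate value theorem: [v] is increasing in [b], so each
   slice [a] has a zero [g a], which moves continuously; then [a -> u a (g a)]
   has a zero by the one-dimensional theorem. *)
Lemma square_common_zero s M (u v : R -> R -> R) :
  0 < s -> 0 <= M ->
  (forall b, Rabs b <= s -> u (- s) b <= 0 <= u s b) ->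
  (forall a, Rabs a <= s -> v a (- s) <= 0 <= v a s) ->
  (forall a b b', Rabs a <= s -> Rabs b <= s -> Rabs b' <= s ->
     Rabs (v a b' - v a b - (b' - b)) <= Rabs (b' - b) / 2 /\
     Rabs (u a b' - u a b) <= M * Rabs (b' - b)) ->
  (forall a a' b, Rabs a <= s -> Rabs a' <= s -> Rabs b <= s ->
     Rabs (u a' b - u a b) <= M * sqrt_mod (a' - a) /\
     Rabs (v a' b - v a b) <= M * sqrt_mod (a' - a)) ->
  exists a b, Rabs a <= s /\ Rabs b <= s /\ u a b = 0 /\ v a b = 0.
Proof.
  intros Hs HM Hu Hv Hb Ha.
  assert (Hcl : forall a, Rabs (clamp s a) <= s) by (intros; apply clamp_abs_le; lra).
  assert (G : forall a, {b | Rabs b <= s /\ v (clamp s a) b = 0}).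
  { intros a. apply slice_zero; [lra|apply Hv, Hcl|].
    intros b b' Hb0 Hb'0. destruct (Hb (clamp s a) b b' (Hcl a) Hb0 Hb'0) as [Hvb _].
    apply Rabs_le_bounds in Hvb. pose proof (Rle_abs (b' - b)) as Hpos.
    pose proof (Rle_abs (- (b' - b))) as Hneg. rewrite Rabs_Ropp in Hneg.
    apply Rabs_le. lra. }
  set (g := fun a => proj1_sig (G a)).
  assert (Hg : forall a, Rabs (g a) <= s /\ v (clamp s a) (g a) = 0)
    by (intros a; exact (proj2_sig (G a))).
  assert (Hgmod : forall x y, Rabs (g x - g y) <= 2 * M * sqrt_mod (x - y)).
  { apply (slice_zeros_modulus s M v g); [lra|exact HM|exact Hg| |].
    - intros a b b' Ha0 Hb0 Hb'0. apply Hb; assumption.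
    - intros a a' b Ha0 Ha'0 Hb0. apply Ha; assumption. }
  destruct (IVT_cor (fun a => u (clamp s a) (g a)) (- s) s) as [a [Ha0 Hua]].
  - apply (clamped_section_continuity s M u g); [lra|exact HM|apply Hg| | |exact Hgmod].
    + intros a b b' Ha0 Hb0 Hb'0. apply Hb; assumption.
    + intros a a' b Ha0 Ha'0 Hb0. apply Ha; assumption.
  - lra.
  - rewrite !clamp_id by (rewrite ?Rabs_Ropp, Rabs_right; lra).
    pose proof (Hu (g (- s)) (proj1 (Hg (- s)))). pose proof (Hu (g s) (proj1 (Hg s))). nra.
  - exists (clamp s a), (g a). destruct (Hg a) as [Hga Hva]. auto.
Qed.

Definition dual1 (v1 v2 : R * R) : R * R := (snd v2 / hdet v1 v2, - fst v2 / hdet v1 v2).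
Definition dual2 (v1 v2 : R * R) : R * R := (- snd v1 / hdet v1 v2, fst v1 / hdet v1 v2).

Section Duals.

Variables v1 v2 : R * R.
Hypothesis Hdet : hdet v1 v2 <> 0.

Lemma dot_dual1_l : dot (dual1 v1 v2) v1 = 1.
Proof. unfold dot, dual1, hdet in *; simpl. field. exact Hdet. Qed.

Lemma dot_dual1_r : dot (dual1 v1 v2) v2 = 0.
Proof. unfold dot, dual1, hdet in *; simpl. field. exact Hdet. Qed.

Lemma dot_dual2_l : dot (dual2 v1 v2) v1 = 0.
Proof. unfold dot, dual2, hdet in *; simpl. field. exact Hdet. Qed.

Lemma dot_dual2_r : dot (dual2 v1 v2) v2 = 1.
Proof. unfold dot, dual2, hdet in *; simpl. field. exact Hdet. Qed.

Lemma dot_dual1_linL q : dot (dual1 v1 v2) (linL v1 v2 q) = hx1 q.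
Proof. unfold dot, dual1, linL, hdet in *; simpl. field. exact Hdet. Qed.

Lemma dot_dual2_linL q : dot (dual2 v1 v2) (linL v1 v2 q) = hx2 q.
Proof. unfold dot, dual2, linL, hdet in *; simpl. field. exact Hdet. Qed.

Lemma linL_dual_decomp u :
  u = linL v1 v2 (mkH (dot (dual1 v1 v2) u) (dot (dual2 v1 v2) u) 0).
Proof.
  destruct u as [u1 u2]. unfold dot, dual1, dual2, linL, hdet in *; simpl.
  f_equal; field; exact Hdet.
Qed.

Lemma eq_of_dual_dots u u' :
  dot (dual1 v1 v2) u = dot (dual1 v1 v2) u' ->
  dot (dual2 v1 v2) u = dot (dual2 v1 v2) u' -> u = u'.
Proof.
  intros E1 E2. rewrite (linL_dual_decomp u), (linL_dual_decomp u'), E1, E2. reflexivity.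
Qed.

End Duals.

Lemma mat_norm_nonneg a b : 0 <= mat_norm a b.
Proof.
  unfold mat_norm. eapply Rle_trans; [apply Rabs_pos|].
  eapply Rle_trans; [apply Rmax_l|apply Rmax_l].
Qed.

Lemma Rpower_term_small C alpha th t : 0 < alpha -> 0 < th -> 0 < t ->
  t <= Rpower (th / (Rabs C + 1)) (1 / alpha) -> C * Rpower t alpha <= th.
Proof.
  intros Hal Hth Ht Hsmall. pose proof (Rabs_pos C). pose proof (Rle_abs C).
  assert (Hpow : Rpower t alpha <= th / (Rabs C + 1)).
  { replace (th / (Rabs C + 1)) with (Rpower (Rpower (th / (Rabs C + 1)) (1 / alpha)) alpha).
    - apply Rle_Rpower_l; lra.
    - rewrite Rpower_mult. replace (1 / alpha * alpha) with 1 by (field; lra).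
      apply Rpower_1, Rdiv_lt_0_compat; lra. }
  pose proof (exp_pos (alpha * ln t)) as Hpos. fold (Rpower t alpha) in Hpos.
  assert (Rabs C * Rpower t alpha <= Rabs C * (th / (Rabs C + 1)))
    by (apply Rmult_le_compat_l; lra).
  assert (Rabs C * (th / (Rabs C + 1)) <= th)
    by (apply (Rmult_le_reg_r (Rabs C + 1)); [lra|]; field_simplify; nra).
  nra.
Qed.

Lemma hgrad_oscillation_small d alpha DF1 DF2 p Rz th :
  is_homog_dist d -> 0 < alpha -> hoelder_on_bounded d alpha DF1 DF2 -> 0 <= Rz -> 0 < th ->
  exists rb, 0 < rb /\ forall r y, 0 <= r <= rb -> hnorm d y <= Rz ->
    mat_norm (vsub (DF1 (hmul p (hdil r y))) (DF1 p)) (vsub (DF2 (hmul p (hdil r y))) (DF2 p))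
      <= th.
Proof.
  intros Hd Hal Hhol HRz Hth.
  pose proof (hnorm_nonneg d Hd p) as Hp.
  destruct (Hhol (hnorm d p + Rz + 1)) as [C HC]; [lra|].
  set (zeta := Rpower (th / (Rabs C + 1)) (1 / alpha)).
  assert (Hzeta : 0 < zeta) by apply exp_pos.
  exists (Rmin 1 (zeta / (Rz + 1))).
  split; [apply Rmin_glb_lt; [lra|apply Rdiv_lt_0_compat; lra]|].
  intros r y [Hr0 Hr] Hy.
  pose proof (Rmin_l 1 (zeta / (Rz + 1))). pose proof (Rmin_r 1 (zeta / (Rz + 1))).
  set (x := hmul p (hdil r y)).
  destruct (Hpt_eq_dec x p) as [-> | Hxp].
  - unfold mat_norm, vsub; simpl. rewrite !Rminus_diag, Rabs_R0, !Rmax_left; lra.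
  - assert (Hrpos : 0 < r).
    { destruct Hr0 as [Hr0|<-]; [exact Hr0|]. exfalso. apply Hxp. unfold x. hring. }
    pose proof (hnorm_nonneg d Hd y).
    assert (Hdxp : d x p = r * hnorm d y) by (unfold x; rewrite d_sym, d_hmul_hdil; auto).
    assert (Hdpos : 0 < d x p).
    { destruct (d_nonneg d Hd x p) as [Hlt|Heq]; [exact Hlt|].
      exfalso. apply Hxp. apply (d_eq0 d Hd). auto. }
    assert (Hsmall : d x p <= zeta).
    { rewrite Hdxp. apply Rle_trans with (zeta / (Rz + 1) * Rz); [apply Rmult_le_compat; lra|].
      apply (Rmult_le_reg_r (Rz + 1)); [lra|]. field_simplify; lra. }
    eapply Rle_trans; [apply HC; auto|].
    + eapply Rle_lt_trans; [apply (d_triangle d Hd h0 p x)|].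
      rewrite (d_sym d Hd p x), Hdxp. fold (hnorm d p). nra.
    + fold (hnorm d p). lra.
    + apply Rpower_term_small; [exact Hal|exact Hth|exact Hdpos|exact Hsmall].
Qed.

Lemma near_identity_grid_onto (U V : R -> R -> R) (x1 x2 t1 t2 s e Lam : R) :
  0 < s <= 1 -> 0 <= e -> 0 <= Lam -> e * (Lam + 2) <= s / 4 ->
  Rabs (t1 - x1) <= s / 4 -> Rabs (t2 - x2) <= s / 4 ->
  (forall a b, Rabs a <= 1 -> Rabs b <= 1 ->
     Rabs (U a b - (x1 + a)) <= e * (Lam + Rabs a + Rabs b) /\
     Rabs (V a b - (x2 + b)) <= e * (Lam + Rabs a + Rabs b)) ->
  (forall a b b', Rabs a <= 1 -> Rabs b <= 1 -> Rabs b' <= 1 ->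
     Rabs (U a b' - U a b) <= e * Rabs (b' - b) /\
     Rabs (V a b' - V a b - (b' - b)) <= e * Rabs (b' - b)) ->
  (forall a a' b, Rabs a <= 1 -> Rabs a' <= 1 -> Rabs b <= 1 ->
     Rabs (U a' b - U a b - (a' - a)) <= e * (Rabs (a' - a) + 6 * sqrt (Rabs (a' - a))) /\
     Rabs (V a' b - V a b) <= e * (Rabs (a' - a) + 6 * sqrt (Rabs (a' - a)))) ->
  exists a b, Rabs a <= s /\ Rabs b <= s /\ U a b = t1 /\ V a b = t2.
Proof.
  intros Hs He HLam Hes Ht1 Ht2 Hval Hb_move Ha_move.
  apply Rabs_le_bounds in Ht1. apply Rabs_le_bounds in Ht2.
  assert (Hs_abs : Rabs s = s /\ Rabs (- s) = s)
    by (rewrite Rabs_Ropp, Rabs_right by lra; split; reflexivity).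
  assert (Hval_s : forall a b, Rabs a <= s -> Rabs b <= s ->
    x1 + a - s / 4 <= U a b <= x1 + a + s / 4 /\ x2 + b - s / 4 <= V a b <= x2 + b + s / 4).
  { intros a b Ha Hb. destruct (Hval a b ltac:(lra) ltac:(lra)) as [EU EV].
    apply Rabs_le_bounds in EU. apply Rabs_le_bounds in EV.
    assert (e * (Lam + Rabs a + Rabs b) <= s / 4) by nra. lra. }
  destruct (square_common_zero s (1 + 6 * e) (fun a b => U a b - t1) (fun a b => V a b - t2))
    as [a [b [Ha [Hb [Eu Ev]]]]]; try lra.
  - intros b Hb. pose proof (Hval_s (- s) b ltac:(lra) Hb).
    pose proof (Hval_s s b ltac:(lra) Hb). lra.
  - intros a Ha. pose proof (Hval_s a (- s) Ha ltac:(lra)).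
    pose proof (Hval_s a s Ha ltac:(lra)). lra.
  - intros a b b' Ha Hb Hb'. destruct (Hb_move a b b' ltac:(lra) ltac:(lra) ltac:(lra)) as [BU BV].
    pose proof (Rabs_pos (b' - b)).
    replace (V a b' - t2 - (V a b - t2) - (b' - b)) with (V a b' - V a b - (b' - b)) by ring.
    replace (U a b' - t1 - (U a b - t1)) with (U a b' - U a b) by ring.
    split; nra.
  - intros a a' b Ha Ha' Hb. destruct (Ha_move a a' b ltac:(lra) ltac:(lra) ltac:(lra)) as [AU AV].
    replace (U a' b - t1 - (U a b - t1)) with (U a' b - U a b) by ring.
    replace (V a' b - t2 - (V a b - t2)) with (V a' b - V a b) by ring.
    pose proof (Rabs_triang (U a' b - U a b - (a' - a)) (a' - a)) as Htri.
    replace (U a' b - U a b - (a' - a) + (a' - a)) with (U a' b - U a b) in Htri by ring.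
    pose proof (Rabs_pos (a' - a)). pose proof (sqrt_pos (Rabs (a' - a))).
    unfold sqrt_mod. split; nra.
  - exists a, b. repeat split; auto; lra.
Qed.

Section GridOnto.

Variables (d : Hpt -> Hpt -> R) (F DF1 DF2 : Hpt -> R * R) (p q0 : Hpt) (r th Rz cm : R).
Hypothesis Hd : is_homog_dist d.
Hypothesis HX : forall i x, vderiv_lim (fun t => F (hmul x (hline i t))) 0 (hgrad DF1 DF2 i x).
Hypothesis Hcm : forall i, hnorm d (hline i 1) <= cm.
Hypothesis Hr : 0 <= r.
Hypothesis Hdet : hdet (DF1 p) (DF2 p) <> 0.
Hypothesis Hosc : forall y, hnorm d y <= Rz ->
  mat_norm (vsub (DF1 (hmul p (hdil r y))) (DF1 p)) (vsub (DF2 (hmul p (hdil r y))) (DF2 p)) <= th.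
Hypothesis HRz : hnorm d q0 + (word_len (reach_word q0) + 10) * cm <= Rz.

Local Notation K := (dual1 (DF1 p) (DF2 p)).
Local Notation L := (dual2 (DF1 p) (DF2 p)).
Local Notation e := ((norm1 K + norm1 L) * th).
Local Notation G a b := (Fpr F DF1 DF2 p r (grid q0 a b)).

Lemma grid_error_nonneg : 0 <= e.
Proof.
  apply Rmult_le_pos; [pose proof (norm1_nonneg K); pose proof (norm1_nonneg L); lra|].
  pose proof (hnorm_hline_bound_nonneg d cm Hd Hcm). pose proof (hnorm_nonneg d Hd q0).
  pose proof (word_len_nonneg (reach_word q0)).
  eapply Rle_trans; [apply mat_norm_nonneg|]. apply (Hosc h0).
  rewrite hnorm_h0 by exact Hd. nra.
Qed.

Lemma dual_oscillation_le l i y : norm1 l <= norm1 K + norm1 L -> hnorm d y <= Rz ->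
  Rabs (dot l (hgrad DF1 DF2 i (hmul p (hdil r y))) - dot l (hgrad DF1 DF2 i p)) <= e.
Proof.
  intros Hl Hy. eapply Rle_trans; [apply dot_hgrad_sub_le|].
  apply Rmult_le_compat; auto using norm1_nonneg, mat_norm_nonneg.
Qed.

Lemma dual1_oscillation_le i y : hnorm d y <= Rz ->
  Rabs (dot K (hgrad DF1 DF2 i (hmul p (hdil r y))) - dot K (hgrad DF1 DF2 i p)) <= e.
Proof. apply dual_oscillation_le. pose proof (norm1_nonneg L). lra. Qed.

Lemma dual2_oscillation_le i y : hnorm d y <= Rz ->
  Rabs (dot L (hgrad DF1 DF2 i (hmul p (hdil r y))) - dot L (hgrad DF1 DF2 i p)) <= e.
Proof. apply dual_oscillation_le. pose proof (norm1_nonneg K). lra. Qed.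

Lemma dual_grid_approx a b : Rabs a <= 1 -> Rabs b <= 1 ->
  Rabs (dot K (G a b) - (hx1 q0 + a)) <= e * (word_len (reach_word q0) + Rabs a + Rabs b) /\
  Rabs (dot L (G a b) - (hx2 q0 + b)) <= e * (word_len (reach_word q0) + Rabs a + Rabs b).
Proof.
  intros Ha Hb. split.
  - pose proof (Fpr_grid_approx d F DF1 DF2 p q0 K r e Rz cm Hd HX Hcm Hr
      dual1_oscillation_le HRz a b Ha Hb) as E.
    now rewrite dot_dual1_l, dot_dual1_r, Rmult_1_r, Rmult_0_r, Rplus_0_r in E.
  - pose proof (Fpr_grid_approx d F DF1 DF2 p q0 L r e Rz cm Hd HX Hcm Hr
      dual2_oscillation_le HRz a b Ha Hb) as E.
    now rewrite dot_dual2_l, dot_dual2_r, Rmult_0_r, Rmult_1_r, Rplus_0_l in E.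
Qed.

Lemma dual_grid_step2 a b b' : Rabs a <= 1 -> Rabs b <= 1 -> Rabs b' <= 1 ->
  Rabs (dot K (G a b') - dot K (G a b)) <= e * Rabs (b' - b) /\
  Rabs (dot L (G a b') - dot L (G a b) - (b' - b)) <= e * Rabs (b' - b).
Proof.
  intros Ha Hb Hb'. split.
  - pose proof (Fpr_grid_step2 d F DF1 DF2 p q0 K r e Rz cm Hd HX Hcm Hr
      dual1_oscillation_le HRz a b b' Ha Hb Hb') as E.
    now rewrite dot_dual1_r, Rmult_0_r, Rminus_0_r in E.
  - pose proof (Fpr_grid_step2 d F DF1 DF2 p q0 L r e Rz cm Hd HX Hcm Hr
      dual2_oscillation_le HRz a b b' Ha Hb Hb') as E.
    now rewrite dot_dual2_r, Rmult_1_r in E.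
Qed.

Lemma dual_grid_step1 a a' b : Rabs a <= 1 -> Rabs a' <= 1 -> Rabs b <= 1 ->
  Rabs (dot K (G a' b) - dot K (G a b) - (a' - a))
    <= e * (Rabs (a' - a) + 6 * sqrt (Rabs (a' - a))) /\
  Rabs (dot L (G a' b) - dot L (G a b)) <= e * (Rabs (a' - a) + 6 * sqrt (Rabs (a' - a))).
Proof.
  intros Ha Ha' Hb. split.
  - pose proof (Fpr_grid_step1 d F DF1 DF2 p q0 K r e Rz cm Hd HX Hcm Hr
      dual1_oscillation_le HRz a a' b Ha Ha' Hb) as E.
    now rewrite dot_dual1_l, Rmult_1_r in E.
  - pose proof (Fpr_grid_step1 d F DF1 DF2 p q0 L r e Rz cm Hd HX Hcm Hr
      dual2_oscillation_le HRz a a' b Ha Ha' Hb) as E.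
    now rewrite dot_dual2_l, Rmult_0_r, Rminus_0_r in E.
Qed.

Lemma Fpr_grid_onto s w : 0 < s <= 1 -> e * (word_len (reach_word q0) + 2) <= s / 4 ->
  Rabs (dot K w - hx1 q0) <= s / 4 -> Rabs (dot L w - hx2 q0) <= s / 4 ->
  exists a b, Rabs a <= s /\ Rabs b <= s /\ G a b = w.
Proof.
  intros Hs Hes Hw1 Hw2.
  destruct (near_identity_grid_onto (fun a b => dot K (G a b)) (fun a b => dot L (G a b))
    (hx1 q0) (hx2 q0) (dot K w) (dot L w) s e (word_len (reach_word q0)))
    as [a [b [Ha [Hb [EK EL]]]]];
    auto using grid_error_nonneg, word_len_nonneg, dual_grid_approx, dual_grid_step1,
      dual_grid_step2.
  exists a, b. split; [exact Ha|]. split; [exact Hb|].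
  apply (eq_of_dual_dots (DF1 p) (DF2 p) Hdet); assumption.
Qed.

End GridOnto.

Definition box (c : R * R) (rho : R) (w : R * R) : Prop :=
  Rabs (fst w - fst c) < rho /\ Rabs (snd w - snd c) < rho.

Lemma dot_box_close l c rho w : box c rho w -> Rabs (dot l w - dot l c) <= norm1 l * rho.
Proof.
  intros [H1 H2]. eapply Rle_trans; [apply dot_sub_le|].
  apply Rmult_le_compat_l; [apply norm1_nonneg|]. apply Rmax_lub; lra.
Qed.

Lemma C1alpha_h_hline d alpha F DF1 DF2 : C1alpha_h d alpha F DF1 DF2 ->
  forall i x, vderiv_lim (fun t => F (hmul x (hline i t))) 0 (hgrad DF1 DF2 i x).
Proof. intros [HX1 [HX2 _]] [|] x; [apply HX1|apply HX2]. Qed.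

Lemma exists_small_scale m cm : 0 < m -> 0 <= cm -> exists s, 0 < s <= 1 /\ 2 * s * cm < m.
Proof.
  intros Hm Hcm. exists (Rmin 1 (m / (2 * cm + 2))).
  pose proof (Rmin_r 1 (m / (2 * cm + 2))) as Hsm.
  split; [split; [apply Rmin_glb_lt; [lra|apply Rdiv_lt_0_compat; lra]|apply Rmin_l]|].
  apply (Rmult_le_compat_r (2 * cm + 2)) in Hsm; [|lra].
  unfold Rdiv in Hsm. rewrite Rmult_assoc, Rinv_l, Rmult_1_r in Hsm by lra. nra.
Qed.

Lemma Fpr_covers_box d alpha F DF1 DF2 p eps q0 :
  is_homog_dist d -> 0 < alpha -> C1alpha_h d alpha F DF1 DF2 ->
  hdet (DF1 p) (DF2 p) <> 0 -> hnorm d q0 < eps ->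
  exists rho rb, 0 < rho /\ 0 < rb /\
    forall w, box (linL (DF1 p) (DF2 p) q0) rho w ->
    forall r, 0 <= r <= rb -> image2 (Fpr F DF1 DF2 p r) (hball d h0 eps) w.
Proof.
  intros Hd Hal HF Hdet Hq0.
  pose proof (C1alpha_h_hline d alpha F DF1 DF2 HF) as HX. destruct HF as [_ [_ Hhol]].
  set (cm := Rmax (hnorm d (hline true 1)) (hnorm d (hline false 1))).
  assert (Hcm : forall i, hnorm d (hline i 1) <= cm) by (intros [|]; [apply Rmax_l|apply Rmax_r]).
  pose proof (hnorm_hline_bound_nonneg d cm Hd Hcm) as Hcm0.
  pose proof (hnorm_nonneg d Hd q0) as Hq0pos.
  destruct (exists_small_scale (eps - hnorm d q0) cm ltac:(lra) Hcm0) as [s [Hs Hs_eps]].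
  set (K := dual1 (DF1 p) (DF2 p)). set (L := dual2 (DF1 p) (DF2 p)).
  set (kap := norm1 K + norm1 L).
  assert (Hkap : 0 <= kap)
    by (pose proof (norm1_nonneg K); pose proof (norm1_nonneg L); unfold kap; lra).
  set (Lam := word_len (reach_word q0)).
  assert (HLam : 0 <= Lam) by apply word_len_nonneg.
  set (Rz := hnorm d q0 + (Lam + 10) * cm).
  set (th := s / (4 * (kap + 1) * (Lam + 2))).
  assert (Hth : 0 < th) by (apply Rdiv_lt_0_compat; nra).
  destruct (hgrad_oscillation_small d alpha DF1 DF2 p Rz th Hd Hal Hhol ltac:(unfold Rz; nra) Hth)
    as [rb [Hrb Hosc]].
  set (rho := s / (4 * (kap + 1))).
  exists rho, rb. split; [apply Rdiv_lt_0_compat; lra|]. split; [exact Hrb|].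
  intros w Hw r Hr.
  assert (Hclose : forall l, norm1 l <= kap ->
    Rabs (dot l w - dot l (linL (DF1 p) (DF2 p) q0)) <= s / 4).
  { intros l Hl. eapply Rle_trans; [apply dot_box_close, Hw|].
    apply Rle_trans with ((kap + 1) * rho); [apply Rmult_le_compat_r; [|lra]|].
    - apply Rlt_le, Rdiv_lt_0_compat; lra.
    - unfold rho. right. field. lra. }
  destruct (Fpr_grid_onto d F DF1 DF2 p q0 r th Rz cm Hd HX Hcm ltac:(lra) Hdet
    (fun y Hy => Hosc r y ltac:(lra) Hy) ltac:(unfold Rz, Lam; lra) s w Hs)
    as [a [b [Ha [Hb Hab]]]].
  - fold K L kap Lam. apply Rle_trans with ((kap + 1) * th * (Lam + 2)).
    + apply Rmult_le_compat_r; [lra|]. apply Rmult_le_compat_r; lra.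
    + unfold th. right. field. lra.
  - rewrite <- (dot_dual1_linL _ _ Hdet q0). apply Hclose.
    pose proof (norm1_nonneg L). unfold kap, K, L in *. lra.
  - rewrite <- (dot_dual2_linL _ _ Hdet q0). apply Hclose.
    pose proof (norm1_nonneg K). unfold kap, K, L in *. lra.
  - exists (grid q0 a b). split; [|exact Hab]. unfold hball.
    pose proof (hnorm_grid_le d q0 cm Hd Hcm a b). unfold hnorm in *. nra.
Qed.

Lemma exists_pos_lower_bound {I : Type} (f : I -> R) (l : list I) :
  (forall i, 0 < f i) -> exists m, 0 < m /\ forall i, In i l -> m <= f i.
Proof.
  intros Hf. induction l as [|i l [m [Hm Hle]]].
  - exists 1. split; [lra|]. intros _ [].
  - exists (Rmin (f i) m). split; [apply Rmin_glb_lt; auto|].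
    intros j [<-|Hj]; [apply Rmin_l|]. eapply Rle_trans; [apply Rmin_r|auto].
Qed.

Lemma Rabs_fst_sub_le_dist2 z w : Rabs (fst z - fst w) <= dist2 z w.
Proof.
  unfold dist2. rewrite <- sqrt_Rsqr_abs. apply sqrt_le_1_alt. unfold Rsqr.
  pose proof (pow2_ge_0 (snd z - snd w)). simpl. lra.
Qed.

Lemma Rabs_snd_sub_le_dist2 z w : Rabs (snd z - snd w) <= dist2 z w.
Proof.
  unfold dist2. rewrite <- sqrt_Rsqr_abs. apply sqrt_le_1_alt. unfold Rsqr.
  pose proof (pow2_ge_0 (fst z - fst w)). simpl. lra.
Qed.

Lemma open2_box c rho : open2 (box c rho).
Proof.
  intros z [H1 H2].
  exists (Rmin (rho - Rabs (fst z - fst c)) (rho - Rabs (snd z - snd c))).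
  split; [apply Rmin_glb_lt; lra|].
  intros w Hw. pose proof (Rmin_l (rho - Rabs (fst z - fst c)) (rho - Rabs (snd z - snd c))).
  pose proof (Rmin_r (rho - Rabs (fst z - fst c)) (rho - Rabs (snd z - snd c))).
  pose proof (Rabs_fst_sub_le_dist2 z w). pose proof (Rabs_snd_sub_le_dist2 z w).
  pose proof (Rabs_triang (fst z - fst c) (- (fst z - fst w))).
  pose proof (Rabs_triang (snd z - snd c) (- (snd z - snd w))).
  rewrite Rabs_Ropp in *. split.
  - replace (fst w - fst c) with (fst z - fst c + - (fst z - fst w)) by ring. lra.
  - replace (snd w - snd c) with (snd z - snd c + - (snd z - snd w)) by ring. lra.
Qed.

Lemma compact2_uniform_threshold (K : R * R -> Prop) (P : R -> R * R -> Prop) :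
  compact2 K ->
  (forall z, K z -> exists rho rb, 0 < rho /\ 0 < rb /\
     forall w, box z rho w -> forall r, 0 <= r <= rb -> P r w) ->
  exists rbar, 0 < rbar /\ forall r, 0 <= r <= rbar -> forall z, K z -> P r z.
Proof.
  intros HK Hloc.
  set (good := fun x : (R * R) * R * R => let '(z, rho, rb) := x in
    0 < rho /\ 0 < rb /\ forall w, box z rho w -> forall r, 0 <= r <= rb -> P r w).
  set (I := {x | good x}).
  set (U := fun i : I => let '(z, rho, _) := proj1_sig i in box z rho).
  destruct (HK I U) as [l Hl].
  - intros [[[z rho] rb] Hi]. apply open2_box.
  - intros z Kz. destruct (Hloc z Kz) as [rho [rb Hgood]].
    exists (exist good (z, rho, rb) Hgood). unfold U, box; simpl.
    rewrite !Rminus_diag, Rabs_R0. split; apply Hgood.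
  - destruct (exists_pos_lower_bound (fun i : I => snd (proj1_sig i)) l) as [rbar [Hrbar Hle]].
    { intros [[[z rho] rb] Hi]. apply Hi. }
    exists rbar. split; [exact Hrbar|]. intros r Hr z Kz.
    destruct (Hl z Kz) as [[[[c rho] rb] Hi] [Hin Hz]].
    specialize (Hle _ Hin). simpl in Hle, Hz.
    apply Hi; [exact Hz|lra].
Qed.

Theorem mainTheorem13 (d : Hpt -> Hpt -> R) (alpha : R)
  (F : Hpt -> R * R) (DF1 DF2 : Hpt -> R * R) (p : Hpt) :
  is_homog_dist d ->
  0 < alpha <= 1 ->
  C1alpha_h d alpha F DF1 DF2 ->
  hdet (DF1 p) (DF2 p) <> 0 ->
  forall eps, 0 < eps ->
  forall K : R * R -> Prop,
    compact2 K ->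
    (forall z, K z -> image2 (linL (DF1 p) (DF2 p)) (hball d h0 eps) z) ->
    exists rbar, 0 < rbar /\
      forall r, 0 <= r <= rbar ->
        forall z, K z -> image2 (Fpr F DF1 DF2 p r) (hball d h0 eps) z.
Proof.
  (* only [0 < alpha] is used: the Hoelder bound enters through [d ^ alpha -> 0] *)
  intros Hd Hal HF Hdet eps _ K HK HKL.
  apply compact2_uniform_threshold; [exact HK|].
  intros z Kz. destruct (HKL z Kz) as [q0 [Hq0 <-]].
  apply (Fpr_covers_box d alpha); auto; apply Hal.
Qed.
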